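(* Let $H$ be a finite-dimensional Hopf algebra over $\mathbb{C}$ and $V$ a finite-dimensional left $H$-module. For $\omega\in\mathbb{C}$ with $|\omega|=1$ put $\mathrm{LKer}^{\omega}_V=\{h\in H\mid \sum h_1\otimes h_2\cdot v=\omega\, h\otimes v\ \ \forall v\in V\}$, and $\mathrm{LKer}_V=\mathrm{LKer}^1_V$. Then: (i) if $\mathrm{LKer}^{\omega}_V\neq0$, it is a left coideal of $H$ stable under the left adjoint action $h\cdot a=\sum h_1aS(h_2)$; (ii) $\mathrm{LKer}^{\omega}_V\,\mathrm{LKer}^{\omega'}_V\subset\mathrm{LKer}^{\omega\omega'}_V$; (iii) if $\omega^l=1$ then $\mathrm{LKer}^{\omega}_V\subset\mathrm{LKer}_{V^{\otimes l}}$ (with $H$ acting diagonally on $V^{\otimes l}$); (iv) $\bigoplus_{\omega}\mathrm{LKer}^{\omega}_V$ (sum over all $\omega$ with $|\omega|=1$) is a normal left coideal subalgebra of $H$.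
   Context: A left coideal subalgebra of $H$ is called normal if it is stable under the left adjoint action of $H$ on itself, $h\cdot a=\sum h_1aS(h_2)$, where $S$ is the antipode. *)

From HB Require Import structures.
From mathcomp Require Import all_boot all_order all_algebra.
From mathcomp Require Import mxtens.
Set Implicit Arguments.
Unset Strict Implicit.
Unset Printing Implicit Defensive.
Import Order.TTheory GRing.Theory Num.Theory.
Local Open Scope ring_scope.

(* A finite-dimensional algebra-coalgebra-with-antipode H of dimension n over
   the field C, given by structure constants in a basis (b_i)_{i<n}:
     b_i b_j = \sum_k hm i j k b_k,        1 = \sum_k hu k b_k,
     Delta b_k = \sum_{i,j} hc k i j b_i (x) b_j,   eps b_k = he k,
     S b_i = \sum_p hs i p b_p.
   Elements of H are coordinate row vectors 'rV[C]_n. *)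
Record hopf_data (C : fieldType) (n : nat) := HopfData {
  hm : 'I_n -> 'I_n -> 'I_n -> C;
  hu : 'I_n -> C;
  hc : 'I_n -> 'I_n -> 'I_n -> C;
  he : 'I_n -> C;
  hs : 'I_n -> 'I_n -> C }.

Section Hopf.
Variables (C : fieldType) (n : nat) (H : hopf_data C n).

Definition is_hopf : Prop :=
  (forall i j k q, \sum_p hm H i j p * hm H p k q = \sum_p hm H j k p * hm H i p q) /\
  (forall j k, \sum_i hu H i * hm H i j k = (j == k)%:R) /\
  (forall j k, \sum_i hu H i * hm H j i k = (j == k)%:R) /\
  (forall k i j l, \sum_p hc H k p l * hc H p i j = \sum_p hc H k i p * hc H p j l) /\
  (forall k j, \sum_i he H i * hc H k i j = (k == j)%:R) /\
  (forall k i, \sum_j he H j * hc H k i j = (k == i)%:R) /\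
  (* Delta is an algebra map *)
  (forall i j a b, \sum_p hm H i j p * hc H p a b =
     \sum_a1 \sum_b1 \sum_a2 \sum_b2
        hc H i a1 b1 * hc H j a2 b2 * hm H a1 a2 a * hm H b1 b2 b) /\
  (forall a b, \sum_k hu H k * hc H k a b = hu H a * hu H b) /\
  (forall i j, \sum_p hm H i j p * he H p = he H i * he H j) /\
  (\sum_k hu H k * he H k = 1) /\
  (* antipode *)
  (forall k q, \sum_i \sum_j \sum_p hc H k i j * hs H i p * hm H p j q = he H k * hu H q) /\
  (forall k q, \sum_i \sum_j \sum_p hc H k i j * hs H j p * hm H i p q = he H k * hu H q).

Definition hb (i : 'I_n) : 'rV[C]_n := delta_mx 0 i.
Definition hmul (x y : 'rV[C]_n) : 'rV[C]_n :=
  \row_k \sum_i \sum_j x 0 i * y 0 j * hm H i j k.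
Definition hunit : 'rV[C]_n := \row_k hu H k.
Definition hS (x : 'rV[C]_n) : 'rV[C]_n := \row_p \sum_i x 0 i * hs H i p.
(* Elements of H (x) H are n x n matrices in the basis b_i (x) b_j;
   the simple tensor x (x) y is x^T *m y. *)
Definition comul (x : 'rV[C]_n) : 'M[C]_(n, n) :=
  \matrix_(i, j) \sum_k x 0 k * hc H k i j.

Definition in_HtensL (L : 'rV[C]_n -> Prop) (M : 'M[C]_(n, n)) : Prop :=
  exists s : seq ('rV[C]_n * 'rV[C]_n),
    (forall p, p \in s -> L p.2) /\ M = \sum_(p <- s) (p.1^T *m p.2).

Definition is_subspace (L : 'rV[C]_n -> Prop) : Prop :=
  L 0 /\ forall (a : C) x y, L x -> L y -> L (a *: x + y).

Definition is_left_coideal (L : 'rV[C]_n -> Prop) : Prop :=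
  is_subspace L /\ forall x, L x -> in_HtensL L (comul x).

Definition is_subalgebra (L : 'rV[C]_n -> Prop) : Prop :=
  is_subspace L /\ L hunit /\ forall x y, L x -> L y -> L (hmul x y).

Definition hadj (h a : 'rV[C]_n) : 'rV[C]_n :=
  \sum_i \sum_j comul h i j *: hmul (hmul (hb i) a) (hS (hb j)).

Definition ad_stable (L : 'rV[C]_n -> Prop) : Prop :=
  forall h a, L a -> L (hadj h a).

(* Left H-modules of dimension d: b_i acts on column vectors by rho i. *)
Definition is_hmod (d : nat) (rho : 'I_n -> 'M[C]_d) : Prop :=
  \sum_k hu H k *: rho k = 1%:M /\
  forall i j, rho i *m rho j = \sum_k hm H i j k *: rho k.

Definition hact (d : nat) (rho : 'I_n -> 'M[C]_d) (x : 'rV[C]_n) (v : 'cV[C]_d)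
  : 'cV[C]_d := \sum_k x 0 k *: (rho k *m v).

(* Elements of H (x) V are n x d matrices; x (x) v is x^T *m v^T. *)
Definition tensHV (d : nat) (x : 'rV[C]_n) (v : 'cV[C]_d) : 'M[C]_(n, d) :=
  x^T *m v^T.

Definition coact (d : nat) (rho : 'I_n -> 'M[C]_d) (h : 'rV[C]_n) (v : 'cV[C]_d)
  : 'M[C]_(n, d) :=
  \sum_i \sum_j comul h i j *: tensHV (hb i) (hact rho (hb j) v).

Definition LKer (d : nat) (rho : 'I_n -> 'M[C]_d) (w : C) (h : 'rV[C]_n) : Prop :=
  forall v : 'cV[C]_d, coact rho h v = w *: tensHV h v.

Definition tens_rep (d e : nat) (rho : 'I_n -> 'M[C]_d) (sig : 'I_n -> 'M[C]_e)
  : 'I_n -> 'M[C]_(d * e) :=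
  fun k => \sum_i \sum_j hc H k i j *: tensmx (rho i) (sig j).

(* V^{(x) l}: V^{(x) 0} is the trivial module C (action by eps),
   V^{(x) (l+1)} = V (x) V^{(x) l}. *)
Fixpoint tpow (d : nat) (rho : 'I_n -> 'M[C]_d) (l : nat)
  : {m : nat & 'I_n -> 'M[C]_m} :=
  match l with
  | 0 => existT _ 1%N (fun k => (he H k)%:M)
  | l'.+1 => existT _ (d * projT1 (tpow rho l'))%N
                    (tens_rep rho (projT2 (tpow rho l')))
  end.

End Hopf.

Section Sum.
Variables (C : numClosedFieldType) (n : nat) (H : hopf_data C n).

Definition LKer_sum (d : nat) (rho : 'I_n -> 'M[C]_d) (h : 'rV[C]_n) : Prop :=
  exists s : seq (C * 'rV[C]_n),
    (forall p, p \in s -> `|p.1| = 1 /\ LKer H rho p.1 p.2) /\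
    h = \sum_(p <- s) p.2.

Definition LKer_direct (d : nat) (rho : 'I_n -> 'M[C]_d) : Prop :=
  forall s : seq (C * 'rV[C]_n), uniq (map fst s) ->
    (forall p, p \in s -> `|p.1| = 1 /\ LKer H rho p.1 p.2) ->
    \sum_(p <- s) p.2 = 0 -> forall p, p \in s -> p.2 = 0.
End Sum.

(* Write [Delta h = \sum_i b_i (x) Delta_i h].  Then [h] lies in
   [LKer^w_V] iff [rho (Delta_i h) = w h_i] for every [i], i.e. iff
   [(id (x) rho) (Delta h) = w (h (x) 1)] in the algebra [H (x) End V].
   Coassociativity passes this condition on to every [Delta_i h] (left coideal),
   and together with the counit it gives [rho h = w eps(h)], hence
   [rho^{(x) l} h = w^l eps(h)]; multiplicativity of [(id (x) rho) Delta] gives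
   closure under products.  For the adjoint action, [1 (x) rho(-)] commutes with
   [- (x) 1], and the antipode collapses [\sum (1 (x) rho h_1) (id (x) rho) Delta (S h_2)]
   to [S h (x) 1].  Finally a relation [\sum_w x_w = 0] with [x_w] in [LKer^w_V]
   also yields [\sum_w w x_w = 0], so the argument for eigenvectors with distinct
   eigenvalues shows that the sum is direct. *)

From Pilot Require Import Defs.
From HB Require Import structures.
From mathcomp Require Import all_boot all_order all_algebra.
From mathcomp Require Import mxtens ring.
Set Implicit Arguments.
Unset Strict Implicit.
Unset Printing Implicit Defensive.
Import Order.TTheory GRing.Theory Num.Theory.
Local Open Scope ring_scope.

Lemma sum_delta_scale (R : pzRingType) (V : lmodType R) (I : finType) (F : I -> V) i :
  \sum_k (k == i)%:R *: F k = F i.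
Proof.
rewrite (bigD1 i) //= big1 => [|k ki]; last by rewrite (negbTE ki) scale0r.
by rewrite eqxx scale1r addr0.
Qed.

Lemma sum_delta_mul (R : pzRingType) (I : finType) (F : I -> R) i :
  \sum_k (k == i)%:R * F k = F i.
Proof. exact: (@sum_delta_scale _ R^o). Qed.

Lemma sum_scale_exchange (R : comPzRingType) (V : lmodType R) (I J K L : finType)
    (c : I -> J -> R) (e : K -> L -> R) (M : I -> J -> K -> L -> V) :
  \sum_i \sum_j c i j *: \sum_k \sum_l e k l *: M i j k l =
  \sum_k \sum_l e k l *: \sum_i \sum_j c i j *: M i j k l.
Proof.
under eq_bigr do under eq_bigr do rewrite pair_big scaler_sumr.
under [RHS]eq_bigr do under eq_bigr do rewrite pair_big scaler_sumr.
rewrite [LHS]pair_big [RHS]pair_big exchange_big /=.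
apply: eq_bigr => -[k l] _; apply: eq_bigr => -[i j] _.
by rewrite !scalerA mulrC.
Qed.

Lemma sum4_swap (V : nmodType) (I J K L : finType) (X : I -> J -> K -> L -> V) :
  \sum_i \sum_j \sum_k \sum_l X i j k l = \sum_k \sum_l \sum_i \sum_j X i j k l.
Proof.
under eq_bigr do under eq_bigr do rewrite pair_big.
under [RHS]eq_bigr do under eq_bigr do rewrite pair_big.
by rewrite [LHS]pair_big [RHS]pair_big exchange_big.
Qed.

Lemma bilinear_sumZ (R : comNzRingType) (U U' V : lmodType R)
    (f : {bilinear U -> U' -> V}) (I J : finType) (a : I -> R) (b : J -> R) u v :
  f (\sum_i a i *: u i) (\sum_j b j *: v j) = \sum_i \sum_j (a i * b j) *: f (u i) (v j).
Proof.
rewrite linear_sumlz; apply: eq_bigr => i _.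
rewrite linearZl /= linear_sumr scaler_sumr; apply: eq_bigr => j _.
by rewrite linearZr /= scalerA.
Qed.

Lemma tensmx_is_bilinear (R : comNzRingType) m n p q : bilinear_for
  (GRing.Scale.Law.clone _ _ *:%R _) (GRing.Scale.Law.clone _ _ *:%R _)
  (@tensmx R m n p q).
Proof.
by split=> [B|A] a X Y; apply/matrixP => i j; rewrite !mxE /=; ring.
Qed.
HB.instance Definition _ (R : comNzRingType) m n p q :=
  bilinear_isBilinear.Build R 'M[R]_(m, n) 'M[R]_(p, q) 'M[R]_(m * p, n * q) _ _
    (@tensmx R m n p q) (tensmx_is_bilinear R m n p q).

Lemma scalar_tensmx_scalar (R : comPzRingType) m p (a b : R) :
  (a%:M : 'M[R]_m) *t (b%:M : 'M[R]_p) = (a * b)%:M.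
Proof.
apply/matrixP => i j.
case: (mxtens_indexP i) => i1 i2; case: (mxtens_indexP j) => j1 j2.
rewrite tensmxE !mxE (inj_eq (can_inj (@mxtens_indexK _ _))) xpair_eqE.
by case: (i1 == j1); case: (i2 == j2); rewrite ?mulr1 ?mulr0 ?mul0r.
Qed.

Lemma eigen_family_eq0 (K : fieldType) (V : lmodType K) (E : K -> V -> Prop) :
  (forall w a x, E w x -> E w (a *: x)) ->
  (forall s : seq (K * V), (forall p, p \in s -> E p.1 p.2) ->
    \sum_(p <- s) p.2 = 0 -> \sum_(p <- s) p.1 *: p.2 = 0) ->
  forall s : seq (K * V), uniq (map fst s) -> (forall p, p \in s -> E p.1 p.2) ->
    \sum_(p <- s) p.2 = 0 -> forall p, p \in s -> p.2 = 0.
Proof.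
move=> EZ Ew s; move: {2}(size s) (erefl (size s)) => m.
elim: m s => [|m IHm] [|[w0 x0] s] //= [size_s] /andP[w0_s uniq_s] Es sum0 p.
have Es' p' : p' \in s -> E p'.1 p'.2 by move=> p's; apply: Es; rewrite inE p's orbT.
(* Subtracting [w0] times the relation leaves a shorter relation with weights [w - w0]. *)
pose s' := [seq (q.1, (q.1 - w0) *: q.2) | q <- s].
have sum'0 : \sum_(q <- s') q.2 = 0.
  have := Ew _ Es sum0; have := sum0; rewrite !big_cons /= => sum_s wsum_s.
  rewrite big_map; under eq_bigr do rewrite scalerBl.
  rewrite sumrB -scaler_sumr.
  have -> : \sum_(q <- s) q.1 *: q.2 = - (w0 *: x0).
    by apply/eqP; rewrite -addr_eq0 addrC wsum_s.
  have -> : \sum_(q <- s) q.2 = - x0 by apply/eqP; rewrite -addr_eq0 addrC sum_s.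
  by rewrite scalerN subrr.
have s_eq0 q : q \in s -> q.2 = 0.
  move=> qs; have := IHm s' _ _ _ sum'0 (q.1, (q.1 - w0) *: q.2).
  rewrite size_map size_s -map_comp map_f // => /(_ erefl uniq_s).
  have Es'' q' : q' \in s' -> E q'.1 q'.2 by move=> /mapP[r rs ->] /=; apply: EZ; exact: Es'.
  move=> /(_ Es'' isT) /eqP; rewrite scaler_eq0 subr_eq0 => /orP[/eqP wq|/eqP //].
  by move: w0_s; rewrite -wq map_f.
rewrite inE => /orP[/eqP -> /=|]; last exact: s_eq0.
by move: sum0; rewrite big_cons big1_seq ?addr0 // => q /andP[_]; exact: s_eq0.
Qed.

Section Coordinates.
Variables (C : fieldType) (n : nat) (H : hopf_data C n).
Local Notation vec := 'rV[C]_n.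
Local Notation hb := (@hb C n).

Lemma hbE i k : hb i 0 k = (k == i)%:R.
Proof. by rewrite /hb mxE eqxx. Qed.

Lemma row_hb_expand (x : vec) : x = \sum_k x 0 k *: hb k.
Proof. exact: row_sum_delta. Qed.

Lemma linear_hb_expand (V : lmodType C) (f : {linear vec -> V}) x :
  f x = \sum_k x 0 k *: f (hb k).
Proof. by rewrite {1}[x]row_hb_expand linear_sum; under eq_bigr do rewrite linearZ. Qed.

Lemma hmul_is_bilinear : bilinear_for
  (GRing.Scale.Law.clone _ _ *:%R _) (GRing.Scale.Law.clone _ _ *:%R _) (hmul H).
Proof.
split=> [y|x] a u v; apply/rowP => k; rewrite !mxE mulr_sumr -big_split /=;
  apply: eq_bigr => i _; rewrite mulr_sumr -big_split; apply: eq_bigr => j _;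
  by rewrite !mxE /=; ring.
Qed.
HB.instance Definition _ :=
  bilinear_isBilinear.Build C vec vec vec _ _ (hmul H) hmul_is_bilinear.

Lemma hmul_hb i j : hmul H (hb i) (hb j) = \row_k hm H i j k.
Proof.
apply/rowP => k; rewrite !mxE.
under eq_bigr do under eq_bigr do rewrite !hbE -mulrA.
under eq_bigr do rewrite -mulr_sumr sum_delta_mul.
exact: sum_delta_mul.
Qed.

Lemma hmul_hbE i y q : hmul H (hb i) y 0 q = \sum_b y 0 b * hm H i b q.
Proof.
rewrite mxE; under eq_bigr do under eq_bigr do rewrite hbE -mulrA.
by under eq_bigr do rewrite -mulr_sumr; rewrite sum_delta_mul.
Qed.

Lemma hS_hbE i p : hS H (hb i) 0 p = hs H i p.
Proof. by rewrite mxE; under eq_bigr do rewrite hbE; rewrite sum_delta_mul. Qed.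

Lemma hS_is_linear : linear (hS H).
Proof.
move=> a x y; apply/rowP => p; rewrite !mxE mulr_sumr -big_split.
by apply: eq_bigr => i _; rewrite !mxE /=; ring.
Qed.
HB.instance Definition _ := GRing.isLinear.Build C vec vec _ (hS H) hS_is_linear.

(* [Delta x = \sum_i b_i (x) comul_row i x]. *)
Definition comul_row (i : 'I_n) (x : vec) : vec := row i (comul H x).

Lemma comul_rowE i x j : comul_row i x 0 j = \sum_k x 0 k * hc H k i j.
Proof. by rewrite !mxE. Qed.

Lemma comul_row_is_linear i : linear (comul_row i).
Proof.
move=> a x y; apply/rowP => j; rewrite !(mxE, comul_rowE) mulr_sumr -big_split.
by apply: eq_bigr => k _; rewrite !mxE /=; ring.
Qed.
HB.instance Definition _ i :=
  GRing.isLinear.Build C vec vec _ (comul_row i) (comul_row_is_linear i).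

Lemma comul_row_hb i k : comul_row i (hb k) = \row_j hc H k i j.
Proof.
by apply/rowP => j; rewrite comul_rowE mxE; under eq_bigr do rewrite hbE; rewrite sum_delta_mul.
Qed.

Lemma in_HtensL_comul_row (L : vec -> Prop) x :
  (forall i, L (comul_row i x)) -> in_HtensL L (comul H x).
Proof.
move=> Lx; exists [seq (hb i, comul_row i x) | i <- index_enum 'I_n]; split.
  by move=> p /mapP[i _ ->]; apply: Lx.
rewrite big_map; apply/matrixP => a b; rewrite summxE (bigD1 a) //= big1 => [|i ia].
  by rewrite !mxE big_ord1 !mxE eqxx mul1r addr0.
by rewrite !mxE big_ord1 !mxE (eq_sym a i) (negbTE ia) andbF mul0r.
Qed.

Definition counit (x : vec) : C := \sum_k x 0 k * he H k.

Lemma hadjE h a : hadj H h a = \sum_i hmul H (hmul H (hb i) a) (hS H (comul_row i h)).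
Proof.
rewrite /hadj; apply: eq_bigr => i _.
rewrite [comul_row i h]row_sum_delta linear_sum linear_sumr.
by apply: eq_bigr => j _; rewrite linearZ linearZr /= !mxE.
Qed.

Lemma hadj_is_linear h : linear (hadj H h).
Proof.
move=> c a b; rewrite !hadjE scaler_sumr -big_split; apply: eq_bigr => i _.
by rewrite linearPr /= linearPl.
Qed.
HB.instance Definition _ h := GRing.isLinear.Build C vec vec _ (hadj H h) (hadj_is_linear h).

Definition rep d (rho : 'I_n -> 'M[C]_d) (x : vec) : 'M[C]_d := \sum_k x 0 k *: rho k.

Lemma rep_is_linear d (rho : 'I_n -> 'M[C]_d) : linear (rep rho).
Proof.
move=> a x y; rewrite /rep scaler_sumr -big_split; apply: eq_bigr => k _.
by rewrite !mxE scalerDl scalerA.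
Qed.
HB.instance Definition _ d rho :=
  GRing.isLinear.Build C vec 'M[C]_d _ (@rep d rho) (rep_is_linear rho).

End Coordinates.

Section HopfAlgebra.
Variables (C : fieldType) (n : nat) (H : hopf_data C n).
Hypothesis hH : is_hopf H.
Local Notation vec := 'rV[C]_n.
Local Notation hb := (@hb C n).
Local Notation comul_row := (comul_row H).

Lemma hm_assoc i j k q :
  \sum_p hm H i j p * hm H p k q = \sum_p hm H j k p * hm H i p q.
Proof. by case: hH. Qed.
Lemma hu_mul1l j k : \sum_i hu H i * hm H i j k = (j == k)%:R.
Proof. by case: hH => _ []. Qed.
Lemma hu_mul1r j k : \sum_i hu H i * hm H j i k = (j == k)%:R.
Proof. by case: hH => _ [_ []]. Qed.
Lemma hc_coassoc k i j l :
  \sum_p hc H k p l * hc H p i j = \sum_p hc H k i p * hc H p j l.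
Proof. by case: hH => _ [_ [_ []]]. Qed.
Lemma he_comull k j : \sum_i he H i * hc H k i j = (k == j)%:R.
Proof. by case: hH => _ [_ [_ [_ []]]]. Qed.
Lemma he_comulr k i : \sum_j he H j * hc H k i j = (k == i)%:R.
Proof. by case: hH => _ [_ [_ [_ [_ []]]]]. Qed.
Lemma hc_hm i j a b : \sum_p hm H i j p * hc H p a b =
  \sum_a1 \sum_b1 \sum_a2 \sum_b2
    hc H i a1 b1 * hc H j a2 b2 * hm H a1 a2 a * hm H b1 b2 b.
Proof. by case: hH => _ [_ [_ [_ [_ [_ []]]]]]. Qed.
Lemma hc_hu a b : \sum_k hu H k * hc H k a b = hu H a * hu H b.
Proof. by case: hH => _ [_ [_ [_ [_ [_ [_ []]]]]]]. Qed.
Lemma hs_antipodel k q :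
  \sum_i \sum_j \sum_p hc H k i j * hs H i p * hm H p j q = he H k * hu H q.
Proof. by case: hH => _ [_ [_ [_ [_ [_ [_ [_ [_ [_ []]]]]]]]]]. Qed.
Lemma hs_antipoder k q :
  \sum_i \sum_j \sum_p hc H k i j * hs H j p * hm H i p q = he H k * hu H q.
Proof. by case: hH => _ [_ [_ [_ [_ [_ [_ [_ [_ [_ [_ ]]]]]]]]]]. Qed.

Lemma counit_comul_row i x : counit H (comul_row i x) = x 0 i.
Proof.
transitivity (\sum_k x 0 k * \sum_j he H j * hc H k i j).
  rewrite /counit; under eq_bigr do rewrite comul_rowE mulr_suml.
  rewrite exchange_big; apply: eq_bigr => k _; rewrite mulr_sumr.
  by apply: eq_bigr => j _; rewrite mulrAC -mulrA.
by under eq_bigr do rewrite he_comulr mulrC; rewrite sum_delta_mul.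
Qed.

Lemma sum_he_comul_row x : \sum_i he H i *: comul_row i x = x.
Proof.
apply/rowP => j; rewrite summxE.
transitivity (\sum_k x 0 k * \sum_i he H i * hc H k i j).
  under eq_bigr do rewrite mxE comul_rowE mulr_sumr.
  rewrite exchange_big; apply: eq_bigr => k _; rewrite mulr_sumr.
  by apply: eq_bigr => i _; rewrite mulrCA.
by under eq_bigr do rewrite he_comull mulrC; rewrite sum_delta_mul.
Qed.

Lemma comul_row_coassoc i j x :
  comul_row j (comul_row i x) = \sum_r hc H r i j *: comul_row r x.
Proof.
apply/rowP => l; rewrite comul_rowE summxE.
transitivity (\sum_k x 0 k * \sum_p hc H k i p * hc H p j l).
  under eq_bigr do rewrite comul_rowE mulr_suml.
  rewrite exchange_big; apply: eq_bigr => k _; rewrite mulr_sumr.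
  by apply: eq_bigr => p _; rewrite mulrA.
under eq_bigr do rewrite -hc_coassoc mulr_sumr.
under [RHS]eq_bigr do rewrite mxE comul_rowE mulr_sumr.
rewrite exchange_big; apply: eq_bigr => k _; apply: eq_bigr => p _.
by ring.
Qed.

Lemma comul_row_unit i : comul_row i (hunit H) = hu H i *: hunit H.
Proof. by apply/rowP => b; rewrite comul_rowE !mxE; under eq_bigr do rewrite mxE; rewrite hc_hu. Qed.

Lemma comul_row_mul_hb i k l : comul_row i (hmul H (hb k) (hb l)) =
  \sum_a \sum_b hm H a b i *: hmul H (comul_row a (hb k)) (comul_row b (hb l)).
Proof.
apply/rowP => q; rewrite comul_rowE hmul_hb.
under eq_bigr do rewrite mxE.
rewrite hc_hm summxE; apply: eq_bigr => a1 _; rewrite summxE.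
under [RHS]eq_bigr do rewrite !mxE !comul_row_hb mulr_sumr.
rewrite [RHS]exchange_big /=; apply: eq_bigr => b1 _.
apply: eq_bigr => a2 _; rewrite mulr_sumr; apply: eq_bigr => b2 _.
by rewrite !mxE; ring.
Qed.

Lemma comul_row_mul i x y : comul_row i (hmul H x y) =
  \sum_a \sum_b hm H a b i *: hmul H (comul_row a x) (comul_row b y).
Proof.
rewrite {1}[x]row_hb_expand {1}[y]row_hb_expand bilinear_sumZ linear_sum.
under eq_bigr do rewrite linear_sum.
under eq_bigr do under eq_bigr do rewrite linearZ /= comul_row_mul_hb.
under [RHS]eq_bigr => a _ do under eq_bigr => b _ do
  rewrite (linear_hb_expand (comul_row a) x) (linear_hb_expand (comul_row b) y) bilinear_sumZ.
rewrite sum_scale_exchange; apply: eq_bigr => k _; apply: eq_bigr => l _.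
by do 2!congr (_ *: _); do 2![apply: eq_bigr => ? _]; rewrite !linearZ.
Qed.

Lemma hmul_hS_comul_row_hb k :
  \sum_i hmul H (hS H (hb i)) (comul_row i (hb k)) = he H k *: hunit H.
Proof.
apply/rowP => q; rewrite summxE !mxE -hs_antipodel; apply: eq_bigr => i _.
rewrite !mxE exchange_big /=; apply: eq_bigr => j _; apply: eq_bigr => p _.
by rewrite comul_row_hb hS_hbE !mxE [_ * hc _ _ _ _]mulrC.
Qed.

Lemma hmul_comul_row_hS_hbE k :
  \sum_i hmul H (hb i) (hS H (comul_row i (hb k))) = he H k *: hunit H.
Proof.
apply/rowP => q; rewrite summxE !mxE -hs_antipoder; apply: eq_bigr => i _.
rewrite hmul_hbE [RHS]exchange_big /=; apply: eq_bigr => p _.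
rewrite mxE mulr_suml; apply: eq_bigr => j _.
by rewrite comul_row_hb !mxE.
Qed.

Lemma hmul_comul_row_hS x :
  \sum_i hmul H (hb i) (hS H (comul_row i x)) = counit H x *: hunit H.
Proof.
under eq_bigr do rewrite (linear_hb_expand (comul_row _) x) linear_sum linear_sumr.
rewrite exchange_big /counit scaler_suml; apply: eq_bigr => k _.
under eq_bigr do rewrite linearZ linearZr /=.
by rewrite -scaler_sumr hmul_comul_row_hS_hbE scalerA.
Qed.

(* Coassociativity [(Delta (x) id) Delta y = (id (x) Delta) Delta y], contracted
   with [b_i^*] on the first leg and fed to a bilinear [F]. *)
Lemma sum_comul_row_coassoc (V : lmodType C) (F : vec -> vec -> V) i y :
  (forall z, linear (F^~ z)) -> (forall u, linear (F u)) ->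
  \sum_u F (hb u) (comul_row u (comul_row i y)) =
  \sum_r F (comul_row i (hb r)) (comul_row r y).
Proof.
move=> Fl Fr; transitivity (\sum_u \sum_r hc H r i u *: F (hb u) (comul_row r y)).
  apply: eq_bigr => u _; rewrite comul_row_coassoc.
  pose Fu : {linear vec -> V} := HB.pack (F (hb u)) (GRing.isLinear.Build _ _ _ _ _ (Fr (hb u))).
  have /= -> := linear_sum Fu; apply: eq_bigr => r _.
  by have /= -> := linearZ_LR Fu.
rewrite exchange_big; apply: eq_bigr => r _.
pose Fr' : {linear vec -> V} := HB.pack (F^~ (comul_row r y)) (GRing.isLinear.Build _ _ _ _ _ (Fl _)).
have /= -> := linear_hb_expand Fr' (comul_row i (hb r)).
by apply: eq_bigr => u _; rewrite comul_row_hb mxE.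
Qed.
End HopfAlgebra.

Section Modules.
Variables (C : fieldType) (n : nat) (H : hopf_data C n).
Local Notation vec := 'rV[C]_n.
Local Notation hb := (@hb C n).
Local Notation comul_row := (comul_row H).

Lemma rep_mul d (rho : 'I_n -> 'M[C]_d) x y : is_hmod H rho ->
  rep rho (hmul H x y) = rep rho x *m rep rho y.
Proof.
case=> _ rho_mul; rewrite {1}[x]row_hb_expand {1}[y]row_hb_expand !bilinear_sumZ linear_sum.
apply: eq_bigr => k _; rewrite linear_sum; apply: eq_bigr => l _.
by rewrite linearZ /= hmul_hb rho_mul /rep; under eq_bigr do rewrite mxE.
Qed.

Lemma rep_unit d (rho : 'I_n -> 'M[C]_d) : is_hmod H rho -> rep rho (hunit H) = 1%:M.
Proof. by case=> rho_unit _; rewrite -rho_unit; apply: eq_bigr => k _; rewrite mxE. Qed.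

Lemma rep_tens_rep d e (rho : 'I_n -> 'M[C]_d) (sig : 'I_n -> 'M[C]_e) y :
  rep (tens_rep H rho sig) y = \sum_i rho i *t rep sig (comul_row i y).
Proof.
rewrite /rep /tens_rep; under eq_bigr do rewrite scaler_sumr.
rewrite exchange_big; apply: eq_bigr => i _; rewrite linear_sumr.
under [RHS]eq_bigr do rewrite comul_rowE linearZr /= scaler_suml.
rewrite exchange_big; apply: eq_bigr => k _; rewrite scaler_sumr.
by apply: eq_bigr => j _; rewrite scalerA.
Qed.

Lemma tensHVE d (x : vec) (v : 'cV[C]_d) a c : tensHV x v a c = x 0 a * v c 0.
Proof. by rewrite /tensHV !mxE big_ord1 !mxE. Qed.

Lemma hact_hb d (rho : 'I_n -> 'M[C]_d) j v : hact rho (hb j) v = rho j *m v.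
Proof. by rewrite /hact; under eq_bigr do rewrite hbE; rewrite sum_delta_scale. Qed.

Lemma coactE d (rho : 'I_n -> 'M[C]_d) h v :
  coact H rho h v = \matrix_(a, c) (rep rho (comul_row a h) *m v) c 0.
Proof.
apply/matrixP => a c; rewrite mxE summxE (bigD1 a) //= [X in _ + X]big1 => [|i ia].
  rewrite addr0 summxE mulmx_suml summxE; apply: eq_bigr => j _.
  by rewrite mxE tensHVE hbE eqxx mul1r hact_hb -scalemxAl !mxE.
rewrite summxE big1 // => j _.
by rewrite mxE tensHVE hbE eq_sym (negbTE ia) mul0r mulr0.
Qed.

Lemma LKerP d (rho : 'I_n -> 'M[C]_d) w h :
  LKer H rho w h <-> forall i, rep rho (comul_row i h) = (w * h 0 i)%:M.
Proof.
rewrite /LKer; split => [hw i|hw v].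
  apply/matrixP => c j; move: (hw (delta_mx j 0)) => /matrixP/(_ i c).
  rewrite coactE mxE [in X in _ = X]mxE tensHVE -colE !mxE eqxx andbT => ->.
  by rewrite mulrA; case: eqP; rewrite ?mulr1 ?mulr0.
apply/matrixP => a c; rewrite coactE mxE hw mul_scalar_mx [RHS]mxE tensHVE mxE.
by rewrite mulrA.
Qed.

End Modules.

Section LKerTheory.
Variables (C : fieldType) (n : nat) (H : hopf_data C n) (d : nat) (rho : 'I_n -> 'M[C]_d).
Local Notation comul_row := (comul_row H).
Local Notation LKer := (LKer H rho).

Lemma LKer_subspace w : is_subspace (LKer w).
Proof.
split=> [|a x y /LKerP hx /LKerP hy]; apply/LKerP => i.
  by rewrite !linear0 mxE mulr0 raddf0.
by rewrite !linearP /= hx hy !mxE scale_scalar_mx -raddfD /= mulrDr mulrCA.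
Qed.

Lemma LKerZ w a x : LKer w x -> LKer w (a *: x).
Proof.
by move/LKerP => hx; apply/LKerP => i; rewrite !linearZ /= hx mxE scale_scalar_mx mulrCA.
Qed.

Section HopfModule.
Hypothesis hH : is_hopf H.

Lemma LKer_comul_row w i x : LKer w x -> LKer w (comul_row i x).
Proof.
move/LKerP => hx; apply/LKerP => j; rewrite comul_row_coassoc // linear_sum.
under eq_bigr do rewrite linearZ /= hx scale_scalar_mx.
rewrite -raddf_sum /= comul_rowE mulr_sumr; congr _%:M.
by apply: eq_bigr => k _; ring.
Qed.

Lemma LKer_left_coideal w : is_left_coideal H (LKer w).
Proof.
split=> [|x hx]; first exact: LKer_subspace.
by apply: in_HtensL_comul_row => i; exact: LKer_comul_row.
Qed.

Lemma rep_LKer w y : LKer w y -> rep rho y = (w * counit H y)%:M.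
Proof.
move/LKerP => hy; rewrite -[in LHS](sum_he_comul_row hH y) linear_sum.
under eq_bigr do rewrite linearZ /= hy scale_scalar_mx.
by rewrite -raddf_sum /= mulr_sumr; congr _%:M; apply: eq_bigr => k _; ring.
Qed.

Lemma rep_tpow_LKer w l y : LKer w y ->
  rep (projT2 (tpow H rho l)) y = (w ^+ l * counit H y)%:M.
Proof.
elim: l y => [|l IHl] y hy /=.
  by rewrite mul1r /rep /counit raddf_sum; under eq_bigr do rewrite scale_scalar_mx.
rewrite rep_tens_rep.
under eq_bigr do rewrite (IHl _ (LKer_comul_row _ hy)) counit_comul_row //.
under eq_bigr do rewrite mulrC -scale_scalar_mx linearZr /= -linearZl /=.
by rewrite -linear_sumlz /= -/(rep rho y) (rep_LKer hy) scalar_tensmx_scalar exprS mulrAC.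
Qed.

Lemma LKer_tpow w l h : w ^+ l = 1 -> LKer w h -> Defs.LKer H (projT2 (tpow H rho l)) 1 h.
Proof.
move=> wl1 hh; apply/LKerP => i.
by rewrite (rep_tpow_LKer l (LKer_comul_row i hh)) wl1 counit_comul_row.
Qed.

Hypothesis hR : is_hmod H rho.

Lemma LKer_mul w w' x y : LKer w x -> LKer w' y -> LKer (w * w') (hmul H x y).
Proof.
move=> /LKerP hx /LKerP hy; apply/LKerP => i; rewrite comul_row_mul // linear_sum.
under eq_bigr do rewrite linear_sum.
under eq_bigr do under eq_bigr do rewrite linearZ /= rep_mul // hx hy -scalar_mxM scale_scalar_mx.
under eq_bigr do rewrite -raddf_sum /=.
rewrite -raddf_sum /= mxE mulr_sumr; congr _%:M; apply: eq_bigr => a _.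
by rewrite mulr_sumr; apply: eq_bigr => b _; ring.
Qed.

Lemma LKer_unit : LKer 1 (hunit H).
Proof.
apply/LKerP => i; rewrite comul_row_unit // linearZ /= rep_unit //.
by rewrite mul1r mxE scalemx1.
Qed.

End HopfModule.
End LKerTheory.

Section TensorAlgebra.
Variables (C : fieldType) (n : nat) (H : hopf_data C n) (d : nat) (rho : 'I_n -> 'M[C]_d).
Local Notation vec := 'rV[C]_n.
Local Notation hb := (@hb C n).
Local Notation comul_row := (comul_row H).

(* [F : tensalg] stands for [\sum_q b_q (x) F q] in the algebra [H (x) End V];
   [tensH x = x (x) 1], [tensV x = 1 (x) rho x], [comul_rep x = (id (x) rho) (Delta x)]. *)
Local Notation tensalg := {ffun 'I_n -> 'M[C]_d}.

Definition tens_mul (F G : tensalg) : tensalg :=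
  [ffun q => \sum_i \sum_j hm H i j q *: (F i *m G j)].
Definition tens_one : tensalg := [ffun q => hu H q *: 1%:M].
Definition tensH (x : vec) : tensalg := [ffun i => (x 0 i)%:M].
Definition tensV (x : vec) : tensalg := [ffun i => hu H i *: rep rho x].
Definition comul_rep (x : vec) : tensalg := [ffun i => rep rho (comul_row i x)].

Lemma tens_mul_is_bilinear : bilinear_for
  (GRing.Scale.Law.clone _ _ *:%R _) (GRing.Scale.Law.clone _ _ *:%R _) tens_mul.
Proof.
split=> [G|F] a X Y; apply/ffunP => q; rewrite !ffunE scaler_sumr -big_split;
  apply: eq_bigr => i _; rewrite scaler_sumr -big_split; apply: eq_bigr => j _;
  rewrite !ffunE /=.
- by rewrite mulmxDl scalerDr -scalemxAl !scalerA mulrC.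
- by rewrite mulmxDr scalerDr -scalemxAr !scalerA mulrC.
Qed.
HB.instance Definition _ :=
  bilinear_isBilinear.Build C tensalg tensalg tensalg _ _ tens_mul tens_mul_is_bilinear.

Lemma tensH_is_linear : linear tensH.
Proof. by move=> a x y; apply/ffunP => i; rewrite !ffunE !mxE raddfD /= scale_scalar_mx. Qed.
HB.instance Definition _ := GRing.isLinear.Build C vec tensalg _ tensH tensH_is_linear.

Lemma tensV_is_linear : linear tensV.
Proof. by move=> a x y; apply/ffunP => i; rewrite !ffunE linearP scalerDr !scalerA mulrC. Qed.
HB.instance Definition _ := GRing.isLinear.Build C vec tensalg _ tensV tensV_is_linear.

Lemma comul_rep_is_linear : linear comul_rep.
Proof. by move=> a x y; apply/ffunP => i; rewrite !ffunE !linearP. Qed.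
HB.instance Definition _ := GRing.isLinear.Build C vec tensalg _ comul_rep comul_rep_is_linear.

Section HopfLaws.
Hypothesis hH : is_hopf H.

Lemma tens_mulA F G K : tens_mul (tens_mul F G) K = tens_mul F (tens_mul G K).
Proof.
apply/ffunP => q; rewrite /tens_mul !ffunE.
under eq_bigr do under eq_bigr do (rewrite ffunE mulmx_suml scaler_sumr;
  under eq_bigr do rewrite mulmx_suml scaler_sumr).
under eq_bigr do under eq_bigr do under eq_bigr do under eq_bigr do
  rewrite -scalemxAl scalerA.
under [RHS]eq_bigr do under eq_bigr do (rewrite ffunE mulmx_sumr scaler_sumr;
  under eq_bigr do rewrite mulmx_sumr scaler_sumr).
under [RHS]eq_bigr do under eq_bigr do under eq_bigr do under eq_bigr do
  rewrite -scalemxAr scalerA mulmxA.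
rewrite [LHS]sum4_swap; apply: eq_bigr => i _.
rewrite [RHS]exchange_big; apply: eq_bigr => j _.
rewrite exchange_big [RHS]exchange_big; apply: eq_bigr => k _.
rewrite -!scaler_suml; congr (_ *: _).
under eq_bigr do rewrite mulrC.
by rewrite (hm_assoc hH); apply: eq_bigr => p _; rewrite mulrC.
Qed.

Lemma tens_mul1l F : tens_mul tens_one F = F.
Proof.
apply/ffunP => q; rewrite ffunE exchange_big /=.
under eq_bigr do under eq_bigr do rewrite ffunE -scalemxAl mul1mx scalerA mulrC.
under eq_bigr do rewrite -scaler_suml (hu_mul1l hH).
exact: sum_delta_scale.
Qed.

Lemma tens_mul1r F : tens_mul F tens_one = F.
Proof.
apply/ffunP => q; rewrite ffunE.
under eq_bigr do under eq_bigr do rewrite ffunE -scalemxAr mulmx1 scalerA mulrC.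
under eq_bigr do rewrite -scaler_suml (hu_mul1r hH).
exact: sum_delta_scale.
Qed.

Lemma tensH_mul x y : tensH (hmul H x y) = tens_mul (tensH x) (tensH y).
Proof.
apply/ffunP => q; rewrite !ffunE mxE raddf_sum; apply: eq_bigr => i _.
rewrite raddf_sum; apply: eq_bigr => j _.
by rewrite !ffunE -scalar_mxM scale_scalar_mx mulrC.
Qed.

Lemma tensH_unit : tensH (hunit H) = tens_one.
Proof. by apply/ffunP => q; rewrite !ffunE mxE scalemx1. Qed.

Hypothesis hR : is_hmod H rho.

Lemma comul_rep_mul x y : comul_rep (hmul H x y) = tens_mul (comul_rep x) (comul_rep y).
Proof.
apply/ffunP => q; rewrite !ffunE comul_row_mul // linear_sum; apply: eq_bigr => i _.
by rewrite linear_sum; apply: eq_bigr => j _; rewrite linearZ /= rep_mul // !ffunE.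
Qed.

Lemma comul_rep_unit : comul_rep (hunit H) = tens_one.
Proof. by apply/ffunP => q; rewrite !ffunE comul_row_unit // linearZ /= rep_unit. Qed.

Lemma tens_mul_tensH_tensVE u v :
  tens_mul (tensH u) (tensV v) = [ffun t => u 0 t *: rep rho v].
Proof.
apply/ffunP => t; rewrite !ffunE.
under eq_bigr do under eq_bigr do rewrite !ffunE mul_scalar_mx !scalerA.
under eq_bigr do rewrite -scaler_suml.
rewrite -scaler_suml; congr (_ *: _).
transitivity (\sum_i u 0 i * \sum_j hu H j * hm H i j t).
  by apply: eq_bigr => i _; rewrite mulr_sumr; apply: eq_bigr => j _; ring.
by under eq_bigr do rewrite (hu_mul1r hH) mulrC; rewrite sum_delta_mul.
Qed.

Lemma tens_mul_tensV_tensHE u v :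
  tens_mul (tensV v) (tensH u) = [ffun t => u 0 t *: rep rho v].
Proof.
apply/ffunP => t; rewrite !ffunE exchange_big /=.
under eq_bigr do under eq_bigr do rewrite !ffunE mul_mx_scalar !scalerA.
under eq_bigr do rewrite -scaler_suml.
rewrite -scaler_suml; congr (_ *: _).
transitivity (\sum_j u 0 j * \sum_i hu H i * hm H i j t).
  by apply: eq_bigr => j _; rewrite mulr_sumr; apply: eq_bigr => i _; ring.
by under eq_bigr do rewrite (hu_mul1l hH) mulrC; rewrite sum_delta_mul.
Qed.

Lemma tens_mul_tensV_tensH u v :
  tens_mul (tensV v) (tensH u) = tens_mul (tensH u) (tensV v).
Proof. by rewrite tens_mul_tensH_tensVE tens_mul_tensV_tensHE. Qed.

Lemma comul_rep_expand x :
  comul_rep x = \sum_p tens_mul (tensH (hb p)) (tensV (comul_row p x)).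
Proof.
apply/ffunP => t; rewrite sum_ffunE ffunE.
under eq_bigr do rewrite tens_mul_tensH_tensVE ffunE hbE eq_sym.
by rewrite sum_delta_scale.
Qed.

Lemma LKer_comul_repP w h : LKer H rho w h <-> comul_rep h = w *: tensH h.
Proof.
rewrite LKerP; split => [hw|hw i].
  by apply/ffunP => i; rewrite !ffunE hw scale_scalar_mx.
by move/ffunP/(_ i): hw; rewrite !ffunE scale_scalar_mx.
Qed.

Lemma comul_rep_comul_row i y : comul_rep (comul_row i y) =
  \sum_r tens_mul (tensH (comul_row i (hb r))) (tensV (comul_row r y)).
Proof.
rewrite comul_rep_expand.
apply: (sum_comul_row_coassoc hH (F := fun u z => tens_mul (tensH u) (tensV z))).
  by move=> z a u1 u2; rewrite linearP linearPl.
by move=> u a z1 z2; rewrite linearP linearPr.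
Qed.

Lemma tensV_antipode y : \sum_i
  tens_mul (tensH (hS H (hb i))) (comul_rep (comul_row i y)) = tensV y.
Proof.
under eq_bigr do rewrite comul_rep_comul_row linear_sumr /=.
under eq_bigr do under eq_bigr do rewrite -tens_mulA -tensH_mul.
rewrite exchange_big -[in RHS](sum_he_comul_row hH y) linear_sum; apply: eq_bigr => r _.
rewrite -linear_sumlz -linear_sum /= hmul_hS_comul_row_hb // !linearZ /=.
by rewrite linearZl /= tensH_unit tens_mul1l.
Qed.

Lemma tensH_antipode y : \sum_r
  tens_mul (tensV (hb r)) (comul_rep (hS H (comul_row r y))) = tensH (hS H y).
Proof.
pose F i u z := tens_mul (tensH (hS H (hb i)))
  (tens_mul (comul_rep u) (comul_rep (hS H z))).
transitivity (\sum_i \sum_u F i (hb u) (comul_row u (comul_row i y))).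
  under eq_bigr do rewrite -tensV_antipode linear_sumlz /=.
  rewrite exchange_big; apply: eq_bigr => i _.
  rewrite (sum_comul_row_coassoc hH (F := F i)) => [|z a u1 u2|u a z1 z2].
  - by apply: eq_bigr => r _; rewrite tens_mulA.
  - by rewrite /F linearP linearPl linearPr.
  - by rewrite /F !linearP /= !linearPr.
under eq_bigr do under eq_bigr do rewrite /F -comul_rep_mul.
under eq_bigr do rewrite -linear_sumr -linear_sum /= hmul_comul_row_hS //.
under eq_bigr do rewrite linearZ /= comul_rep_unit linearZr /= tens_mul1r counit_comul_row //.
by rewrite [in RHS](linear_hb_expand (hS H) y) linear_sum; under [RHS]eq_bigr do rewrite linearZ.
Qed.

(* [(id (x) rho) Delta] sends [h_1 a S(h_2)] to
   [(h_1 (x) rho h_2) (w a (x) 1) ((id (x) rho) Delta (S h_3))]; moving [a (x) 1] past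
   [1 (x) rho h_2] and collapsing the last two factors by [tensH_antipode] leaves
   [w (h_1 a S(h_2) (x) 1)]. *)
Lemma LKer_hadj w h a : LKer H rho w a -> LKer H rho w (hadj H h a).
Proof.
move/LKer_comul_repP => ha; apply/LKer_comul_repP.
have coassoc q : \sum_p tens_mul (tensV (comul_row q (hb p)))
    (comul_rep (hS H (comul_row p h))) = tensH (hS H (comul_row q h)).
  rewrite -(sum_comul_row_coassoc hH (F := fun u z => tens_mul (tensV u) (comul_rep (hS H z)))).
  - exact: tensH_antipode.
  - by move=> z c u1 u2; rewrite linearP linearPl.
  - by move=> u c z1 z2; rewrite !linearP /= linearPr.
have reassoc q v Z : tens_mul (tens_mul (tens_mul (tensH (hb q)) (tensV v))
    (tensH a)) Z = tens_mul (tensH (hmul H (hb q) a)) (tens_mul (tensV v) Z).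
  rewrite (tens_mulA (tensH _) (tensV _)) tens_mul_tensV_tensH.
  by rewrite -(tens_mulA (tensH _) (tensH _)) -tensH_mul tens_mulA.
rewrite hadjE linear_sum.
under eq_bigr => p _ do rewrite /= !comul_rep_mul ha (comul_rep_expand (hb p)) !linear_sumlz.
under eq_bigr do under eq_bigr do rewrite linearZr /= linearZl /= reassoc.
rewrite exchange_big /=.
under eq_bigr do rewrite -scaler_sumr -linear_sumr /= coassoc -tensH_mul.
by rewrite -scaler_sumr -linear_sum.
Qed.

End HopfLaws.
End TensorAlgebra.

Section Independence.
Variables (C : fieldType) (n : nat) (H : hopf_data C n) (d : nat) (rho : 'I_n -> 'M[C]_d).
(* For [d = 0] every vector lies in every [LKer^w_V]. *)
Hypothesis d_gt0 : (0 < d)%N.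

Lemma LKer_weighted_sum_eq0 (s : seq (C * 'rV[C]_n)) :
  (forall p, p \in s -> LKer H rho p.1 p.2) ->
  \sum_(p <- s) p.2 = 0 -> \sum_(p <- s) p.1 *: p.2 = 0.
Proof.
move=> Es sum0; apply/rowP => i; rewrite summxE mxE.
have : rep rho (comul_row H i (\sum_(p <- s) p.2)) = (\sum_(p <- s) p.1 * p.2 0 i)%:M.
  rewrite !linear_sum raddf_sum /=; apply: eq_big_seq => p ps.
  by have /LKerP -> := Es p ps.
rewrite sum0 !linear0 => /matrixP/(_ (Ordinal d_gt0) (Ordinal d_gt0)).
by rewrite !mxE eqxx mulr1n => e; rewrite [RHS]e; apply: eq_bigr => p _; rewrite mxE.
Qed.

Lemma LKer_direct_sum s : uniq (map fst s) -> (forall p, p \in s -> LKer H rho p.1 p.2) ->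
  \sum_(p <- s) p.2 = 0 -> forall p, p \in s -> p.2 = 0.
Proof.
apply: eigen_family_eq0 => [w a x|]; [exact: LKerZ | exact: LKer_weighted_sum_eq0].
Qed.

End Independence.

Section LKerSum.
Variables (C : numClosedFieldType) (n : nat) (H : hopf_data C n).
Variables (d : nat) (rho : 'I_n -> 'M[C]_d).
Local Notation vec := 'rV[C]_n.
Local Notation LKer_sum := (LKer_sum H rho).

Lemma LKer_sum_subspace : is_subspace LKer_sum.
Proof.
split=> [|a x y [sx [hx ->]] [sy [hy ->]]]; first by exists [::]; rewrite big_nil.
exists ([seq (p.1, a *: p.2) | p <- sx] ++ sy); split; last first.
  by rewrite big_cat big_map scaler_sumr.
move=> p; rewrite mem_cat => /orP[/mapP[q qs ->]|]; last exact: hy.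
by have [q1 hq] := hx q qs; split=> //; exact: LKerZ.
Qed.

Lemma LKer_sum_linear (f : {linear vec -> vec}) :
  (forall w x, LKer H rho w x -> LKer H rho w (f x)) -> forall x, LKer_sum x -> LKer_sum (f x).
Proof.
move=> fLKer x [s [hs ->]]; exists [seq (p.1, f p.2) | p <- s]; split.
  by move=> p /mapP[q qs ->]; have [q1 hq] := hs q qs; split=> //; exact: fLKer.
by rewrite big_map linear_sum.
Qed.

Hypothesis hH : is_hopf H.

Lemma LKer_sum_left_coideal : is_left_coideal H LKer_sum.
Proof.
split=> [|x hx]; first exact: LKer_sum_subspace.
apply: in_HtensL_comul_row => i; apply: (LKer_sum_linear (f := comul_row H i)) hx.
by move=> w y; apply: LKer_comul_row.
Qed.

Hypothesis hR : is_hmod H rho.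

Lemma LKer_sum_ad_stable : ad_stable H LKer_sum.
Proof.
by move=> h a; apply: (LKer_sum_linear (f := hadj H h)) => w x; apply: LKer_hadj.
Qed.

Lemma LKer_sum_subalgebra : is_subalgebra H LKer_sum.
Proof.
split; first exact: LKer_sum_subspace.
split.
  exists [:: (1, hunit H)]; split; last by rewrite big_seq1.
  by move=> p; rewrite inE => /eqP -> /=; split; [exact: normr1 | exact: LKer_unit].
move=> x y [sx [hx ->]] [sy [hy ->]].
exists [seq (pq.1.1 * pq.2.1, hmul H pq.1.2 pq.2.2) | pq <- [seq (p, q) | p <- sx, q <- sy]].
split; last first.
  rewrite big_map big_allpairs linear_sumlz /=.
  by apply: eq_bigr => p _; rewrite linear_sumr.
move=> r /mapP[[p q] /allpairsP[[p' q'] [/= p's q's [-> ->]]] ->] /=.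
have [p1 hp] := hx _ p's; have [q1 hq] := hy _ q's.
by split; [rewrite normrM p1 q1 mulr1 | exact: LKer_mul].
Qed.

End LKerSum.

Theorem lemma3p1 (C : numClosedFieldType) (n : nat) (H : hopf_data C n)
  (d : nat) (rho : 'I_n -> 'M[C]_d) :
  is_hopf H -> is_hmod H rho ->
  (* (i) *)
  (forall w : C, `|w| = 1 ->
     (exists h, h != 0 /\ LKer H rho w h) ->
     is_left_coideal H (LKer H rho w) /\ ad_stable H (LKer H rho w)) /\
  (* (ii) *)
  (forall w w' : C, `|w| = 1 -> `|w'| = 1 ->
     forall x y, LKer H rho w x -> LKer H rho w' y ->
       LKer H rho (w * w') (hmul H x y)) /\
  (* (iii) *)
  (forall (w : C) (l : nat), `|w| = 1 -> w ^+ l = 1 ->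
     forall h, LKer H rho w h -> LKer H (projT2 (tpow H rho l)) 1 h) /\
  (* (iv) *)
  ((0 < d)%N -> LKer_direct H rho) /\
  is_left_coideal H (LKer_sum H rho) /\
  is_subalgebra H (LKer_sum H rho) /\
  ad_stable H (LKer_sum H rho).
Proof.
move=> hH hR; split; [|split; [|split; [|split]]].
- move=> w _ _; split; first exact: LKer_left_coideal.
  by move=> h a; exact: LKer_hadj.
- by move=> w w' _ _ x y; exact: LKer_mul.
- by move=> w l _ wl h; exact: LKer_tpow.
- move=> d_gt0 s uniq_s hs; apply: (LKer_direct_sum (H := H) (rho := rho) d_gt0 uniq_s) => p ps.
  by have [] := hs p ps.
split; [exact: LKer_sum_left_coideal | split; [exact: LKer_sum_subalgebra |]].
exact: LKer_sum_ad_stable.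
Qed.
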